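(* Let $A$ be a Banach algebra and $n\ge 2$ such that $Mul_{n,l}(A,A^{*})$ is algebraically reflexive, and let $X$ be a right Banach $A$-module with $\{x\in X: x^{\perp}=A\}=\{0\}$. Then every approximately local left $n$-multiplier from $A$ into $X$ is a left $n$-multiplier.
   Context: $A^*$ is the dual of $A$, a right Banach $A$-module via $(f\cdot a)(b)=f(ab)$. A bounded linear map $T:A\to X$ is a left $n$-multiplier if $T(a_1\cdots a_n)=T(a_1\cdots a_{n-1})\cdot a_n$ for all $a_i\in A$; $Mul_{n,l}(A,X)$ is the set of these. $T$ is an approximately local left $n$-multiplier if for every $a\in A$ there is a sequence $(T_{a,m})_m$ in $Mul_{n,l}(A,X)$ with $T(a)=\lim_m T_{a,m}(a)$. For $S\subseteq B(A,Y)$, $\mathrm{ref}(S)=\{T\in B(A,Y): T(x)\in\overline{\{s(x):s\in S\}}\ \forall x\in A\}$; $S$ is algebraically reflexive if $\mathrm{ref}(S)\subseteq S$. For $x\in X$, $x^\perp=\{a\in A: x\cdot a=0\}$. *)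

From Stdlib Require Import Reals Lra.
Open Scope R_scope.
Set Implicit Arguments.

Record C := mkC { Cre : R; Cim : R }.
Definition C0 : C := mkC 0 0.
Definition C1 : C := mkC 1 0.
Definition Cadd (z w : C) : C := mkC (Cre z + Cre w) (Cim z + Cim w).
Definition Copp (z : C) : C := mkC (- Cre z) (- Cim z).
Definition Csub (z w : C) : C := Cadd z (Copp w).
Definition Cmul (z w : C) : C :=
  mkC (Cre z * Cre w - Cim z * Cim w) (Cre z * Cim w + Cim z * Cre w).
Definition Cabs (z : C) : R := sqrt (Cre z * Cre z + Cim z * Cim z).

Record NormedSpace := {
  ns_car :> Type;
  ns_zero : ns_car;
  ns_add : ns_car -> ns_car -> ns_car;
  ns_opp : ns_car -> ns_car;
  ns_scal : C -> ns_car -> ns_car;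
  ns_norm : ns_car -> R;
  ns_addA : forall x y z, ns_add x (ns_add y z) = ns_add (ns_add x y) z;
  ns_addC : forall x y, ns_add x y = ns_add y x;
  ns_add0 : forall x, ns_add ns_zero x = x;
  ns_addN : forall x, ns_add (ns_opp x) x = ns_zero;
  ns_scalA : forall c d x, ns_scal c (ns_scal d x) = ns_scal (Cmul c d) x;
  ns_scal1 : forall x, ns_scal C1 x = x;
  ns_scalDr : forall c x y, ns_scal c (ns_add x y) = ns_add (ns_scal c x) (ns_scal c y);
  ns_scalDl : forall c d x, ns_scal (Cadd c d) x = ns_add (ns_scal c x) (ns_scal d x);
  ns_norm_eq0 : forall x, ns_norm x = 0 -> x = ns_zero;
  ns_norm_triangle : forall x y, ns_norm (ns_add x y) <= ns_norm x + ns_norm y;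
  ns_norm_scal : forall c x, ns_norm (ns_scal c x) = Cabs c * ns_norm x
}.

Arguments ns_zero {_}.
Arguments ns_add {_}.
Arguments ns_opp {_}.
Arguments ns_scal {_}.
Arguments ns_norm {_}.

Definition ns_sub {V : NormedSpace} (x y : V) : V := ns_add x (ns_opp y).

Definition ns_lim {V : NormedSpace} (u : nat -> V) (l : V) : Prop :=
  forall eps, eps > 0 -> exists N, forall m, (m >= N)%nat -> ns_norm (ns_sub (u m) l) < eps.

Definition ns_complete (V : NormedSpace) : Prop :=
  forall u : nat -> V,
    (forall eps, eps > 0 -> exists N, forall p q, (p >= N)%nat -> (q >= N)%nat ->
        ns_norm (ns_sub (u p) (u q)) < eps) ->
    exists l, ns_lim u l.

Record BanachSpace := { bs_ns :> NormedSpace; bs_complete : ns_complete bs_ns }.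

Record BanachAlgebra := {
  ba_bs :> BanachSpace;
  ba_mul : ba_bs -> ba_bs -> ba_bs;
  ba_mulA : forall a b c, ba_mul a (ba_mul b c) = ba_mul (ba_mul a b) c;
  ba_mulDl : forall a b c, ba_mul (ns_add a b) c = ns_add (ba_mul a c) (ba_mul b c);
  ba_mulDr : forall a b c, ba_mul a (ns_add b c) = ns_add (ba_mul a b) (ba_mul a c);
  ba_scal_mull : forall k a b, ba_mul (ns_scal k a) b = ns_scal k (ba_mul a b);
  ba_scal_mulr : forall k a b, ba_mul a (ns_scal k b) = ns_scal k (ba_mul a b);
  ba_norm_mul : forall a b, ns_norm (ba_mul a b) <= ns_norm a * ns_norm b
}.
Arguments ba_mul {_}.

Record RightBanachModule (A : BanachAlgebra) := {
  rm_bs :> BanachSpace;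
  rm_act : rm_bs -> A -> rm_bs;
  rm_actDl : forall x y a, rm_act (ns_add x y) a = ns_add (rm_act x a) (rm_act y a);
  rm_actDr : forall x a b, rm_act x (ns_add a b) = ns_add (rm_act x a) (rm_act x b);
  rm_act_scall : forall k x a, rm_act (ns_scal k x) a = ns_scal k (rm_act x a);
  rm_act_scalr : forall k x a, rm_act x (ns_scal k a) = ns_scal k (rm_act x a);
  rm_actA : forall x a b, rm_act (rm_act x a) b = rm_act x (ba_mul a b);
  rm_norm_act : forall x a, ns_norm (rm_act x a) <= ns_norm x * ns_norm a
}.
Arguments rm_act {_ _}.

Fixpoint prodA {A : BanachAlgebra} (f : nat -> A) (k : nat) : A :=
  match k with
  | O => f O
  | S k' => ba_mul (prodA f k') (f (S k'))
  end.
(* For n >= 1, a_1 ... a_n is  prodA f (n-1)  with a_i = f (i-1). *)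

Definition is_bounded_linear {A : BanachAlgebra} {V : NormedSpace} (T : A -> V) : Prop :=
  (forall a b, T (ns_add a b) = ns_add (T a) (T b)) /\
  (forall k a, T (ns_scal k a) = ns_scal k (T a)) /\
  (exists M, forall a, ns_norm (T a) <= M * ns_norm a).

Definition Mul_nl {A : BanachAlgebra} {X : RightBanachModule A} (n : nat) (T : A -> X) : Prop :=
  is_bounded_linear T /\
  forall f : nat -> A, T (prodA f (n - 1)) = rm_act (T (prodA f (n - 2))) (f (n - 1)%nat).

Definition approx_local_Mul_nl {A : BanachAlgebra} {X : RightBanachModule A} (n : nat)
  (T : A -> X) : Prop :=
  is_bounded_linear T /\
  forall a : A, exists Ta : nat -> (A -> X),
    (forall m, Mul_nl n (Ta m)) /\ ns_lim (fun m => Ta m a) (T a).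

(* An element of A^* is a bounded (complex) linear functional A -> C.
   A map T : A -> A^* is represented as T : A -> A -> C, with T a the functional. *)
Definition is_dual_elt {A : BanachAlgebra} (g : A -> C) : Prop :=
  (forall a b, g (ns_add a b) = Cadd (g a) (g b)) /\
  (forall k a, g (ns_scal k a) = Cmul k (g a)) /\
  (exists M, forall a, Cabs (g a) <= M * ns_norm a).

Definition is_bounded_linear_dual {A : BanachAlgebra} (T : A -> A -> C) : Prop :=
  (forall a, is_dual_elt (T a)) /\
  (forall a a' b, T (ns_add a a') b = Cadd (T a b) (T a' b)) /\
  (forall k a b, T (ns_scal k a) b = Cmul k (T a b)) /\
  (exists M, forall a b, Cabs (T a b) <= M * ns_norm a * ns_norm b).

Definition dual_act {A : BanachAlgebra} (g : A -> C) (a : A) : A -> C :=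
  fun b => g (ba_mul a b).

Definition Mul_nl_dual {A : BanachAlgebra} (n : nat) (T : A -> A -> C) : Prop :=
  is_bounded_linear_dual T /\
  forall (f : nat -> A) (b : A),
    T (prodA f (n - 1)) b = dual_act (T (prodA f (n - 2))) (f (n - 1)%nat) b.

(* ref(Mul_{n,l}(A,A^* )): T in B(A,A^* ) such that T(x) lies in the norm closure
   (dual norm) of { s(x) : s in Mul_{n,l}(A,A^* ) } for all x.
   Dual norm ||g||_* <= eps  iff  forall b, |g b| <= eps ||b||. *)
Definition ref_Mul_nl_dual {A : BanachAlgebra} (n : nat) (T : A -> A -> C) : Prop :=
  is_bounded_linear_dual T /\
  forall x : A, forall eps, eps > 0 ->
    exists s, Mul_nl_dual n s /\
      forall b, Cabs (Csub (T x b) (s x b)) <= eps * ns_norm b.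

Definition Mul_nl_dual_alg_reflexive (A : BanachAlgebra) (n : nat) : Prop :=
  forall T : A -> A -> C, ref_Mul_nl_dual n T -> Mul_nl_dual n T.

(* If d := T (a_1 ... a_n) - T (a_1 ... a_(n-1)) . a_n were nonzero, some d . b would be
   nonzero, and Hahn-Banach gives a bounded functional psi on X with psi (d . b) <> 0.
   Composing with psi turns U : A -> X into S_U : A -> A^*, S_U x c = psi (U x . c); this
   maps left n-multipliers to left n-multipliers, so continuity of psi puts S_T in the
   reflexive closure of Mul_{n,l}(A, A^* ). By reflexivity S_T is a left n-multiplier, and
   evaluating its identity at b gives psi (d . b) = 0. *)

From Stdlib Require Import Reals Lra Classical ClassicalEpsilon.
From mathcomp Require classical_sets.
Open Scope R_scope.

Lemma Ceq (z w : C) : Cre z = Cre w -> Cim z = Cim w -> z = w.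
Proof. destruct z, w; simpl; intros; subst; reflexivity. Qed.

Lemma Cabs_real r : Cabs (mkC r 0) = Rabs r.
Proof.
  unfold Cabs; simpl. replace (r * r + 0 * 0) with (Rsqr r) by (unfold Rsqr; ring).
  apply sqrt_Rsqr_abs.
Qed.

Lemma Cabs_le_Rabs (a b : R) : Cabs (mkC a b) <= Rabs a + Rabs b.
Proof.
  unfold Cabs; simpl.
  assert (ha : Rabs a * Rabs a = a * a) by (rewrite <- Rabs_mult; apply Rabs_right; nra).
  assert (hb : Rabs b * Rabs b = b * b) by (rewrite <- Rabs_mult; apply Rabs_right; nra).
  pose proof (Rabs_pos a); pose proof (Rabs_pos b).
  rewrite <- (sqrt_square (Rabs a + Rabs b)) by lra.
  apply sqrt_le_1_alt. nra.
Qed.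

Section NormedSpaceFacts.
Variable V : NormedSpace.
Local Notation "x +v y" := (ns_add x y) (at level 50, left associativity).
Local Notation "0v" := (@ns_zero V).

Lemma ns_addr0 (x : V) : x +v 0v = x.
Proof. rewrite ns_addC; apply ns_add0. Qed.

Lemma ns_addrN (x : V) : x +v ns_opp x = 0v.
Proof. rewrite ns_addC; apply ns_addN. Qed.

Lemma ns_addrI (z x y : V) : z +v x = z +v y -> x = y.
Proof.
  intro H. rewrite <- (ns_add0 V x), <- (ns_add0 V y), <- (ns_addN V z), <- !ns_addA, H.
  reflexivity.
Qed.

Lemma ns_addIr (z x y : V) : x +v z = y +v z -> x = y.
Proof. rewrite (ns_addC V x), (ns_addC V y). apply ns_addrI. Qed.

Lemma ns_addrACA (a b c d : V) : (a +v b) +v (c +v d) = (a +v c) +v (b +v d).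
Proof. rewrite <- !ns_addA. f_equal. rewrite !ns_addA. f_equal. apply ns_addC. Qed.

Lemma ns_subrK (x y : V) : ns_sub x y +v y = x.
Proof. unfold ns_sub. rewrite <- ns_addA, ns_addN. apply ns_addr0. Qed.

Lemma ns_add_eq_sub (x w x' w' : V) : x +v w = x' +v w' -> ns_sub x' x = ns_sub w w'.
Proof.
  intro H. apply (ns_addIr x). rewrite ns_subrK. apply (ns_addIr w').
  rewrite <- H, <- ns_addA, (ns_addC V x w'), ns_addA, ns_subrK. apply ns_addC.
Qed.

Lemma ns_scal0 (x : V) : ns_scal C0 x = 0v.
Proof.
  apply (ns_addrI (ns_scal C0 x)). rewrite ns_addr0, <- ns_scalDl.
  f_equal. apply Ceq; simpl; ring.
Qed.

Lemma ns_opp_scal (x : V) : ns_opp x = ns_scal (mkC (-1) 0) x.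
Proof.
  apply (ns_addrI x). rewrite ns_addrN. rewrite <- (ns_scal1 V x) at 1.
  rewrite <- ns_scalDl, <- (ns_scal0 x). f_equal. apply Ceq; simpl; ring.
Qed.

Lemma ns_norm0 : ns_norm 0v = 0.
Proof.
  rewrite <- (ns_scal0 0v), ns_norm_scal. unfold C0. rewrite Cabs_real, Rabs_R0. ring.
Qed.

Lemma ns_normN (x : V) : ns_norm (ns_opp x) = ns_norm x.
Proof.
  rewrite ns_opp_scal, ns_norm_scal, Cabs_real, Rabs_left by lra. ring.
Qed.

Lemma ns_norm_ge0 (x : V) : 0 <= ns_norm x.
Proof.
  pose proof (ns_norm_triangle V x (ns_opp x)). rewrite ns_addrN, ns_norm0, ns_normN in H.
  lra.
Qed.

Lemma ns_norm_gt0 (x : V) : x <> 0v -> 0 < ns_norm x.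
Proof.
  intro H. destruct (ns_norm_ge0 x) as [h|h]; auto.
  exfalso; apply H, ns_norm_eq0; auto.
Qed.

Lemma ns_norm_subC (x y : V) : ns_norm (ns_sub x y) = ns_norm (ns_sub y x).
Proof.
  rewrite <- (ns_normN (ns_sub y x)). f_equal. apply (ns_addrI (ns_sub y x)). rewrite ns_addrN.
  unfold ns_sub. rewrite ns_addrACA, (ns_addC V (ns_opp x)), ns_addrACA, !ns_addrN.
  apply ns_addr0.
Qed.

Definition rs (r : R) (x : V) : V := ns_scal (mkC r 0) x.

Lemma rs_mul r s x : rs r (rs s x) = rs (r * s) x.
Proof. unfold rs. rewrite ns_scalA. f_equal. apply Ceq; simpl; ring. Qed.

Lemma rs_addl r s x : rs (r + s) x = rs r x +v rs s x.
Proof. unfold rs. rewrite <- ns_scalDl. f_equal. apply Ceq; simpl; ring. Qed.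

Lemma rs_addr r x y : rs r (x +v y) = rs r x +v rs r y.
Proof. apply ns_scalDr. Qed.

Lemma rs1 x : rs 1 x = x.
Proof. unfold rs. rewrite <- (ns_scal1 V x) at 2. reflexivity. Qed.

Lemma rs0 x : rs 0 x = 0v.
Proof. apply ns_scal0. Qed.

Lemma rsN1 x : rs (-1) x = ns_opp x.
Proof. symmetry; apply ns_opp_scal. Qed.

Lemma rs_subl r s x : ns_sub (rs r x) (rs s x) = rs (r - s) x.
Proof.
  unfold ns_sub, Rminus. rewrite <- rsN1, rs_mul, rs_addl. do 2 f_equal. ring.
Qed.

Lemma rs_norm r x : ns_norm (rs r x) = Rabs r * ns_norm x.
Proof. unfold rs. rewrite ns_norm_scal, Cabs_real. reflexivity. Qed.

Lemma rsK r x : r <> 0 -> rs r (rs (/ r) x) = x.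
Proof. intro h. rewrite rs_mul, Rinv_r by exact h. apply rs1. Qed.

End NormedSpaceFacts.
Arguments rs {V}.

Lemma bigcup_chain2 {T : Type} {F : classical_sets.set (classical_sets.set T)} {p q : T} :
  classical_sets.total_on F classical_sets.subset ->
  classical_sets.bigcup F (fun X => X) p -> classical_sets.bigcup F (fun X => X) q ->
  exists2 X, F X & X p /\ X q.
Proof.
  intros Htot [X FX Xp] [Y FY Yq].
  destruct (Htot X Y FX FY) as [XY|YX].
  - exists Y; auto.
  - exists X; auto.
Qed.

Section HahnBanach.
Variable V : NormedSpace.
Local Notation "x +v y" := (ns_add x y) (at level 50, left associativity).
Local Notation "0v" := (@ns_zero V).

(* Partial functionals are encoded by their graphs so that Zorn's lemma can act on sets. *)
Record dominated_linear_graph (G : V * R -> Prop) : Prop := {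
  dlg_functional : forall x a b, G (x, a) -> G (x, b) -> a = b;
  dlg_add : forall x1 x2 a1 a2, G (x1, a1) -> G (x2, a2) -> G (x1 +v x2, a1 + a2);
  dlg_scal : forall x a r, G (x, a) -> G (rs r x, r * a);
  dlg_le : forall x a, G (x, a) -> a <= ns_norm x
}.
Arguments dlg_functional {G} _ {x a b}.
Arguments dlg_add {G} _ {x1 x2 a1 a2}.
Arguments dlg_scal {G} _ {x a} r.
Arguments dlg_le {G} _ {x a}.

Section Extension.
Variable G : V * R -> Prop.
Hypothesis hG : dominated_linear_graph G.

Lemma dlg_zero {x a} : G (x, a) -> G (0v, 0).
Proof.
  intro Hx. replace (0v, 0) with (rs 0 x, 0 * a) by (rewrite rs0, Rmult_0_l; reflexivity).
  apply (dlg_scal hG), Hx.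
Qed.

Lemma dlg_sub {x a x' a'} : G (x, a) -> G (x', a') -> G (ns_sub x' x, a' - a).
Proof.
  intros Hx Hx'. unfold ns_sub, Rminus. rewrite <- rsN1.
  replace (- a) with (-1 * a) by ring.
  apply (dlg_add hG); [exact Hx'|]. apply (dlg_scal hG), Hx.
Qed.

Lemma dlg_le_shift (w : V) (c s : R) :
  0 < s -> (forall v b, G (v, b) -> b + c <= ns_norm (v +v w)) ->
  forall x a, G (x, a) -> a + s * c <= ns_norm (x +v rs s w).
Proof.
  intros hs Hw x a Hx.
  pose proof (Hw _ _ (dlg_scal hG (/ s) Hx)) as H.
  replace (x +v rs s w) with (rs s (rs (/ s) x +v w))
    by (rewrite rs_addr, rsK by lra; reflexivity).
  rewrite rs_norm, Rabs_pos_eq by lra.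
  replace (a + s * c) with (s * (/ s * a + c)) by (field; lra).
  apply Rmult_le_compat_l; lra.
Qed.

Variable z : V.
Hypothesis hz : ~ exists a, G (z, a).

(* One-step Hahn--Banach: the value c at z must lie between the supremum and infimum
   below, which are ordered because a + b <= |u + v| <= |u - z| + |v + z|. *)
Lemma extension_value x0 a0 : G (x0, a0) ->
  exists c, forall v b, G (v, b) ->
    b + c <= ns_norm (v +v z) /\ b - c <= ns_norm (ns_sub v z).
Proof.
  intro H0.
  assert (Hsep : forall u a v b, G (u, a) -> G (v, b) ->
            a - ns_norm (ns_sub u z) <= ns_norm (v +v z) - b).
  { intros u a v b Hu Hv. pose proof (dlg_le hG (dlg_add hG Hu Hv)) as Huv.
    replace (u +v v) with (ns_sub u z +v (v +v z)) in Huv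
      by (unfold ns_sub; rewrite ns_addrACA, ns_addN, ns_addr0; reflexivity).
    pose proof (ns_norm_triangle V (ns_sub u z) (v +v z)). lra. }
  pose (E := fun r => exists u a, G (u, a) /\ r = a - ns_norm (ns_sub u z)).
  destruct (completeness E) as [c [Hub Hlub]].
  - exists (ns_norm (x0 +v z) - a0). intros r [u [a [Hu ->]]]. apply Hsep; auto.
  - exists (a0 - ns_norm (ns_sub x0 z)), x0, a0. auto.
  - exists c. intros v b Hv. split.
    + enough (c <= ns_norm (v +v z) - b) by lra.
      apply Hlub. intros r [u [a [Hu ->]]]. apply Hsep; auto.
    + enough (b - ns_norm (ns_sub v z) <= c) by lra.
      apply Hub. exists v, b. auto.
Qed.

Definition graph_extension (c : R) (p : V * R) : Prop :=
  exists x a t, G (x, a) /\ p = (x +v rs t z, a + t * c).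

Lemma graph_extension_sub c p : G p -> graph_extension c p.
Proof.
  destruct p as [w e]. intro Hp. exists w, e, 0. split; [exact Hp|].
  rewrite rs0, ns_addr0, Rmult_0_l, Rplus_0_r. reflexivity.
Qed.

Lemma graph_extension_at c : G (0v, 0) -> graph_extension c (z, c).
Proof.
  intro H0. exists 0v, 0, 1. split; [exact H0|].
  rewrite rs1, ns_add0. f_equal; ring.
Qed.

Lemma graph_extension_dlg c :
  (forall v b, G (v, b) -> b + c <= ns_norm (v +v z) /\ b - c <= ns_norm (ns_sub v z)) ->
  dominated_linear_graph (graph_extension c).
Proof.
  intro Hc. constructor.
  - intros w e e' [x [a [t [Hx E]]]] [x' [a' [t' [Hx' E']]]].
    injection E as Ew Ee. injection E' as Ew' Ee'. subst e e'.
    assert (Ht : t = t').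
    { apply NNPP. intro Htt. apply hz.
      assert (Hd : ns_sub x' x = rs (t - t') z)
        by (rewrite <- rs_subl; apply ns_add_eq_sub; congruence).
      exists (/ (t - t') * (a' - a)).
      replace z with (rs (/ (t - t')) (ns_sub x' x))
        by (rewrite Hd, rs_mul, Rinv_l, rs1 by lra; reflexivity).
      apply (dlg_scal hG), dlg_sub; assumption. }
    subst t'. assert (x' = x) by (apply (ns_addIr V (rs t z)); congruence). subst x'.
    rewrite (dlg_functional hG Hx Hx'). reflexivity.
  - intros w1 w2 e1 e2 [x1 [a1 [t1 [H1 E1]]]] [x2 [a2 [t2 [H2 E2]]]].
    injection E1 as -> ->. injection E2 as -> ->.
    exists (x1 +v x2), (a1 + a2), (t1 + t2). split; [apply (dlg_add hG); assumption|].
    rewrite ns_addrACA, rs_addl. f_equal; ring.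
  - intros w e r [x [a [t [Hx E]]]]. injection E as -> ->.
    exists (rs r x), (r * a), (r * t). split; [apply (dlg_scal hG), Hx|].
    rewrite rs_addr, rs_mul. f_equal; ring.
  - intros w e [x [a [t [Hx E]]]]. injection E as -> ->.
    destruct (Rtotal_order t 0) as [tn|[t0|tp]].
    + replace (rs t z) with (rs (- t) (ns_opp z)) by (rewrite <- rsN1, rs_mul; f_equal; ring).
      replace (a + t * c) with (a + - t * - c) by ring.
      apply (dlg_le_shift (ns_opp z) (- c)); [lra| |exact Hx].
      intros v b Hv. destruct (Hc v b Hv). unfold ns_sub in *. lra.
    + subst t. rewrite rs0, ns_addr0, Rmult_0_l, Rplus_0_r. apply (dlg_le hG), Hx.
    + apply (dlg_le_shift z c); [lra| |exact Hx].
      intros v b Hv. apply (proj1 (Hc v b Hv)).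
Qed.

End Extension.
Arguments dlg_zero {G} hG {x a}.
Arguments extension_value {G} hG z {x0 a0}.
Arguments graph_extension_sub {G} z c {p}.
Arguments graph_extension_at {G} z c.
Arguments graph_extension_dlg {G} hG {z} hz {c}.

Variable y : V.
Hypothesis hy : y <> 0v.

Definition line_graph (p : V * R) : Prop := exists r, p = (rs r y, r * ns_norm y).

Lemma line_graph_dlg : dominated_linear_graph line_graph.
Proof.
  constructor.
  - intros x a b [r E] [s E']. injection E as Ex ->. injection E' as Ex' ->.
    assert (Hrs : Rabs (r - s) * ns_norm y = 0)
      by (rewrite <- rs_norm, <- rs_subl, <- Ex, <- Ex'; unfold ns_sub;
          rewrite ns_addrN; apply ns_norm0).
    pose proof (ns_norm_gt0 V y hy).
    destruct (Req_dec (r - s) 0) as [h|h].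
    + replace s with r by lra. reflexivity.
    + pose proof (Rabs_pos_lt _ h). nra.
  - intros x1 x2 a1 a2 [r E1] [s E2]. injection E1 as -> ->. injection E2 as -> ->.
    exists (r + s). rewrite rs_addl. f_equal; ring.
  - intros x a t [r E]. injection E as -> ->. exists (t * r). rewrite rs_mul. f_equal; ring.
  - intros x a [r E]. injection E as -> ->. rewrite rs_norm.
    pose proof (ns_norm_ge0 V y). pose proof (Rle_abs r). nra.
Qed.

(* The guard [G p -> ...] rather than plain [G (y, |y|)] lets the empty union of the
   empty chain qualify for Zorn's lemma. *)
Definition norming_graph (G : V * R -> Prop) : Prop :=
  dominated_linear_graph G /\ forall p, G p -> G (y, ns_norm y).

Lemma norming_graph_chain (F : classical_sets.set (classical_sets.set (V * R))) :
  classical_sets.subset F norming_graph ->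
  classical_sets.total_on F classical_sets.subset ->
  norming_graph (classical_sets.bigcup F (fun X => X)).
Proof.
  intros HF Htot.
  assert (Hmem : forall X p, F X -> X p -> classical_sets.bigcup F (fun X => X) p)
    by (intros X p FX Xp; exists X; assumption).
  split; [constructor|].
  - intros x a b Ha Hb. destruct (bigcup_chain2 Htot Ha Hb) as [X FX [Xa Xb]].
    exact (dlg_functional (proj1 (HF X FX)) Xa Xb).
  - intros x1 x2 a1 a2 H1 H2. destruct (bigcup_chain2 Htot H1 H2) as [X FX [X1 X2]].
    apply (Hmem X _ FX), (dlg_add (proj1 (HF X FX)) X1 X2).
  - intros x a r [X FX Xa]. apply (Hmem X _ FX), (dlg_scal (proj1 (HF X FX)) r Xa).
  - intros x a [X FX Xa]. exact (dlg_le (proj1 (HF X FX)) Xa).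
  - intros p [X FX Xp]. apply (Hmem X _ FX), (proj2 (HF X FX) p Xp).
Qed.

Lemma maximal_norming_graph :
  exists G, dominated_linear_graph G /\ G (y, ns_norm y) /\ forall x, exists a, G (x, a).
Proof.
  destruct (classical_sets.Zorn_bigcup norming_graph_chain) as [G [[HG Hy] Gmax]].
  assert (Gy : G (y, ns_norm y)).
  { destruct (classic (exists p, G p)) as [[p Gp]|Gempty]; [exact (Hy p Gp)|].
    exfalso. apply (Gmax line_graph).
    - split; [intros p Gp; exfalso; eauto|].
      intro Hsub. apply Gempty. exists (y, ns_norm y). apply Hsub.
      exists 1. rewrite rs1, Rmult_1_l. reflexivity.
    - split; [exact line_graph_dlg|]. intros _ _. exists 1. rewrite rs1, Rmult_1_l. reflexivity. }
  exists G. split; [exact HG|]. split; [exact Gy|].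
  intro z. apply NNPP. intro hz.
  destruct (extension_value HG z Gy) as [c Hc].
  apply (Gmax (graph_extension G z c)).
  - split; [intro p; exact (graph_extension_sub z c)|].
    intro Hsub. apply hz. exists c. apply Hsub, graph_extension_at, (dlg_zero HG Gy).
  - split; [exact (graph_extension_dlg HG hz Hc)|].
    intros _ _. apply (graph_extension_sub z c Gy).
Qed.

Lemma hahn_banach_real : exists phi : V -> R,
  (forall u v, phi (u +v v) = phi u + phi v) /\ (forall r u, phi (rs r u) = r * phi u) /\
  (forall u, phi u <= ns_norm u) /\ phi y = ns_norm y.
Proof.
  destruct maximal_norming_graph as [G [HG [Gy Gtot]]].
  pose (phi := fun x => proj1_sig (constructive_indefinite_description _ (Gtot x))).
  assert (Hphi : forall x, G (x, phi x))
    by (intro x; exact (proj2_sig (constructive_indefinite_description _ (Gtot x)))).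
  exists phi. repeat split.
  - intros u v. exact (dlg_functional HG (Hphi _) (dlg_add HG (Hphi u) (Hphi v))).
  - intros r u. exact (dlg_functional HG (Hphi _) (dlg_scal HG r (Hphi u))).
  - intro u. exact (dlg_le HG (Hphi u)).
  - exact (dlg_functional HG (Hphi y) Gy).
Qed.

End HahnBanach.
Arguments hahn_banach_real {V y}.

Lemma hahn_banach_complex {V : NormedSpace} {y : V} : y <> ns_zero ->
  exists psi : V -> C,
    (forall u v, psi (ns_add u v) = Cadd (psi u) (psi v)) /\
    (forall k u, psi (ns_scal k u) = Cmul k (psi u)) /\
    (forall u, Cabs (psi u) <= 2 * ns_norm u) /\ psi y <> C0.
Proof.
  intro hy. destruct (hahn_banach_real hy) as [phi [Padd [Pscal [Ple Py]]]].
  set (iu := @ns_scal V (mkC 0 1)).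
  assert (Pscal_C : forall p q u, phi (ns_scal (mkC p q) u) = p * phi u + q * phi (iu u)).
  { intros p q u. rewrite <- Pscal, <- Pscal, <- Padd. f_equal. unfold rs, iu.
    rewrite ns_scalA, <- ns_scalDl. f_equal. apply Ceq; simpl; ring. }
  assert (Pabs : forall u, Rabs (phi u) <= ns_norm u).
  { intro u. apply Rabs_le. split; [|apply Ple].
    pose proof (Ple (rs (-1) u)). rewrite Pscal, rsN1, ns_normN in H. lra. }
  (* psi u = phi u - i phi (i u) is the complex-linear functional with real part phi *)
  exists (fun u => mkC (phi u) (- phi (iu u))). repeat split.
  - intros u v. apply Ceq; simpl; rewrite ?Padd; [ring|].
    unfold iu. rewrite ns_scalDr, Padd. ring.
  - intros [p q] u.
    assert (Hiu : iu (ns_scal (mkC p q) u) = ns_scal (mkC (- q) p) u)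
      by (unfold iu; rewrite ns_scalA; f_equal; apply Ceq; simpl; ring).
    apply Ceq; simpl; rewrite ?Hiu, !Pscal_C; ring.
  - intro u. eapply Rle_trans; [apply Cabs_le_Rabs|]. rewrite Rabs_Ropp.
    assert (Hn : ns_norm (iu u) = ns_norm u).
    { unfold iu. rewrite ns_norm_scal. unfold Cabs; simpl.
      replace (0 * 0 + 1 * 1) with 1 by ring. rewrite sqrt_1. ring. }
    pose proof (Pabs u). pose proof (Pabs (iu u)). lra.
  - intro E. pose proof (ns_norm_gt0 V y hy).
    apply (f_equal Cre) in E. simpl in E. lra.
Qed.

Definition multiplier_defect {A : BanachAlgebra} {X : RightBanachModule A} (n : nat)
  (T : A -> X) (f : nat -> A) : X :=
  ns_sub (T (prodA f (n - 1))) (rm_act (T (prodA f (n - 2))) (f (n - 1)%nat)).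

Lemma Mul_nl_of_defect {A : BanachAlgebra} {X : RightBanachModule A} (n : nat) (T : A -> X) :
  is_bounded_linear T -> (forall f, multiplier_defect n T f = ns_zero) -> Mul_nl n T.
Proof.
  intros HT Hd. split; [exact HT|]. intro f.
  rewrite <- (ns_subrK X (T (prodA f (n - 1))) (rm_act (T (prodA f (n - 2))) (f (n - 1)%nat))).
  fold (multiplier_defect n T f). rewrite Hd. apply ns_add0.
Qed.

Lemma rm_actBl {A : BanachAlgebra} (X : RightBanachModule A) (x y : X) (a : A) :
  rm_act (ns_sub x y) a = ns_sub (rm_act x a) (rm_act y a).
Proof.
  unfold ns_sub. rewrite rm_actDl, !ns_opp_scal, rm_act_scall. reflexivity.
Qed.

Section DualPullback.
Variables (A : BanachAlgebra) (X : RightBanachModule A).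
Variables (psi : X -> C) (M : R).
Hypothesis psi_add : forall u v, psi (ns_add u v) = Cadd (psi u) (psi v).
Hypothesis psi_scal : forall k u, psi (ns_scal k u) = Cmul k (psi u).
Hypothesis psi_bound : forall u, Cabs (psi u) <= M * ns_norm u.
Hypothesis M_pos : 0 < M.

Lemma psi_sub u v : psi (ns_sub u v) = Csub (psi u) (psi v).
Proof.
  unfold ns_sub, Csub. rewrite psi_add, ns_opp_scal, psi_scal. f_equal.
  apply Ceq; simpl; ring.
Qed.

Definition dual_pullback (U : A -> X) : A -> A -> C := fun x c => psi (rm_act (U x) c).

Lemma dual_pullback_bounded_linear {U} :
  is_bounded_linear U -> is_bounded_linear_dual (dual_pullback U).
Proof.
  intros [U_add [U_scal [K UK]]]. unfold dual_pullback. repeat split.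
  - intros b c. rewrite rm_actDr. apply psi_add.
  - intros k b. rewrite rm_act_scalr. apply psi_scal.
  - exists (M * ns_norm (U a)). intro c.
    eapply Rle_trans; [apply psi_bound|]. rewrite Rmult_assoc.
    apply Rmult_le_compat_l; [lra|]. apply rm_norm_act.
  - intros a a' b. rewrite U_add, rm_actDl. apply psi_add.
  - intros k a b. rewrite U_scal, rm_act_scall. apply psi_scal.
  - exists (M * K). intros a b.
    eapply Rle_trans; [apply psi_bound|]. rewrite !Rmult_assoc.
    apply Rmult_le_compat_l; [lra|].
    eapply Rle_trans; [apply rm_norm_act|]. rewrite <- Rmult_assoc.
    apply Rmult_le_compat_r; [apply ns_norm_ge0|]. apply UK.
Qed.

Lemma dual_pullback_Mul_nl {n U} : Mul_nl n U -> Mul_nl_dual n (dual_pullback U).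
Proof.
  intros [U_bl U_mul]. split; [exact (dual_pullback_bounded_linear U_bl)|].
  intros f b. unfold dual_pullback, dual_act. rewrite U_mul, rm_actA. reflexivity.
Qed.

Lemma dual_pullback_ref {n T} : approx_local_Mul_nl n T -> ref_Mul_nl_dual n (dual_pullback T).
Proof.
  intros [T_bl T_loc]. split; [exact (dual_pullback_bounded_linear T_bl)|].
  intros x eps Heps.
  destruct (T_loc x) as [Ta [Ta_mul Ta_lim]].
  destruct (Ta_lim (eps / M)) as [N HN]; [apply Rdiv_lt_0_compat; lra|].
  exists (dual_pullback (Ta N)). split; [exact (dual_pullback_Mul_nl (Ta_mul N))|].
  intro c. unfold dual_pullback. rewrite <- psi_sub, <- rm_actBl.
  eapply Rle_trans; [apply psi_bound|].
  eapply Rle_trans; [apply Rmult_le_compat_l; [lra|apply rm_norm_act]|].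
  rewrite ns_norm_subC, <- Rmult_assoc.
  apply Rmult_le_compat_r; [apply ns_norm_ge0|].
  pose proof (HN N (le_n N)) as HNN.
  apply Rmult_lt_compat_l with (r := M) in HNN; [|lra].
  replace (M * (eps / M)) with eps in HNN by (field; lra). lra.
Qed.

Lemma dual_pullback_defect {n T} : Mul_nl_dual n (dual_pullback T) ->
  forall f b, psi (rm_act (multiplier_defect n T f) b) = C0.
Proof.
  intros [_ T_mul] f b. specialize (T_mul f b).
  unfold dual_pullback, dual_act in T_mul. rewrite <- rm_actA in T_mul.
  unfold multiplier_defect. rewrite rm_actBl, psi_sub, T_mul.
  apply Ceq; simpl; ring.
Qed.

End DualPullback.
Arguments dual_pullback_ref {A X psi M} _ _ _ _ {n T}.
Arguments dual_pullback_defect {A X psi} _ _ {n T}.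

Theorem theorem3p3 (A : BanachAlgebra) (n : nat) (hn : (2 <= n)%nat)
  (hrefl : Mul_nl_dual_alg_reflexive A n)
  (X : RightBanachModule A)
  (hX : forall x : X, (forall a : A, rm_act x a = ns_zero) -> x = ns_zero)
  (T : A -> X) (hT : approx_local_Mul_nl n T) :
  Mul_nl n T.
Proof.
  apply Mul_nl_of_defect; [exact (proj1 hT)|]. intro f.
  apply hX. intro b. apply NNPP. intro Hne.
  destruct (hahn_banach_complex Hne) as [psi [psi_add [psi_scal [psi_bound psi_ne]]]].
  apply psi_ne.
  assert (Hpos : 0 < 2) by lra.
  pose proof (dual_pullback_ref psi_add psi_scal psi_bound Hpos hT) as Href.
  exact (dual_pullback_defect psi_add psi_scal (hrefl _ Href) f b).
Qed.
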